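(* Let $d$ be an even positive integer. Then $\tilde M^{(d)}$ equals the set of submatrices, indexed by $[N]^{d/2}\times[N]^{d/2}$, of matrices $\bm Z\in M^{(d)}$.
   Context: For a finite alphabet $[N]$, $[N]^{\le k}$ is the set of strings (including the empty string) of length at most $k$ over $[N]$; $\bm s\circ\bm t$ is concatenation; $\mathsf{odd}(\bm s)$ is the set of symbols occurring an odd number of times in $\bm s$. $M^{(d)}$ (degree $d$ complete pseudomoment matrices) is the set of real matrices $\bm Z$ with rows and columns indexed by $[N]^{\le d/2}$ such that (1) $\bm Z\succeq 0$; (2) $Z_{\bm s\bm t}$ depends only on $\mathsf{odd}(\bm s\circ\bm t)$; (3) $Z_{\bm s\bm t} = 1$ whenever $\mathsf{odd}(\bm s\circ\bm t)=\emptyset$. $\tilde M^{(d)}$ (degree $d$ truncated pseudomoment matrices) is the set of real matrices $\tilde{\bm Z}$ with rows and columns indexed by $[N]^{d/2}$ (strings of length exactly $d/2$) satisfying the same three conditions for $\bm s,\bm t\in[N]^{d/2}$. *)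

From HB Require Import structures.
From mathcomp Require Import all_boot all_order all_algebra.
Set Implicit Arguments. Unset Strict Implicit. Unset Printing Implicit Defensive.
Import Order.TTheory GRing.Theory Num.Theory.
Local Open Scope ring_scope.

(* Strings over the alphabet [N] = 'I_N of length at most k:
   a string is a pair (l, s) with l <= k and s an l-tuple. *)
Definition strle (N k : nat) := {l : 'I_k.+1 & l.-tuple 'I_N}.

Definition strle_seq (N k : nat) (s : strle N k) : seq 'I_N := val (tagged s).

Definition str_emb (N k : nat) (s : k.-tuple 'I_N) : strle N k :=
  @Tagged 'I_k.+1 ord_max (fun l : 'I_k.+1 => l.-tuple 'I_N) s.

Definition odd_syms (N : nat) (s : seq 'I_N) : {set 'I_N} :=
  [set i | odd (count_mem i s)].

Definition psd (R : realFieldType) (T : finType) (Z : T -> T -> R) : Prop :=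
  (forall s t, Z s t = Z t s) /\
  (forall x : T -> R, 0 <= \sum_(s : T) \sum_(t : T) x s * Z s t * x t).

(* a matrix indexed by T, whose index s is read as the string w s,
   satisfies conditions (1)-(3) *)
Definition pseudomoment (R : realFieldType) (N : nat) (T : finType)
    (w : T -> seq 'I_N) (Z : T -> T -> R) : Prop :=
  [/\ psd Z,
      (forall s t s' t', odd_syms (w s ++ w t) = odd_syms (w s' ++ w t') ->
                         Z s t = Z s' t')
    & (forall s t, odd_syms (w s ++ w t) = set0 -> Z s t = 1)].

Definition complete_pm (R : realFieldType) (N d : nat)
    (Z : strle N d./2 -> strle N d./2 -> R) : Prop :=
  pseudomoment (@strle_seq N d./2) Z.

Definition truncated_pm (R : realFieldType) (N d : nat)
    (Z : d./2.-tuple 'I_N -> d./2.-tuple 'I_N -> R) : Prop :=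
  pseudomoment (fun s : d./2.-tuple 'I_N => val s) Z.

From HB Require Import structures.
From mathcomp Require Import all_boot all_order all_algebra.
Import Order.TTheory GRing.Theory Num.Theory.
Local Open Scope ring_scope.
Set Implicit Arguments. Unset Strict Implicit.

(* Restriction: the three pseudomoment conditions are stable under pulling a
   matrix back along any reindexing map that respects the strings; positive
   semidefiniteness pulls back because the quadratic form of the pulled-back
   matrix at x is the quadratic form of the original at the push-forward of x.

   Extension (alphabet [n+1], k = d/2): pad every string of length <= k with
   the symbol 0 up to length k, and let Z s t be Zt (pad s) (pad t) when s and
   t have lengths of the same parity, and 0 otherwise.  Padding two strings of
   equal length parity adds an even number of 0's, so odd(s o t) is unchanged;
   and |odd(s o t)| has the parity of |s| + |t|, so conditions (2)-(3) transfer
   from Zt.  The matrix is a direct sum of two pulled-back copies of Zt, hence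
   is positive semidefinite.  For the empty alphabet, [N]^k is empty (k > 0)
   and the all-ones matrix serves as the complete extension. *)

Section PsdPullback.
Variables (R : realFieldType) (A B : finType) (f : A -> B).

Lemma quad_pullback (M : B -> B -> R) (x : A -> R) :
  \sum_(a : A) \sum_(a' : A) x a * M (f a) (f a') * x a' =
  \sum_(b : B) \sum_(b' : B)
     (\sum_(a | f a == b) x a) * M b b' * (\sum_(a | f a == b') x a).
Proof.
have fibre b b' :
    (\sum_(a | f a == b) x a) * M b b' * (\sum_(a | f a == b') x a) = \sum_(a | f a == b) \sum_(a' | f a' == b') x a * M (f a) (f a') * x a'.
  rewrite -mulrA big_distrl /=; apply: eq_bigr => a /eqP <-.
  by rewrite mulrA big_distrr /=; apply: eq_bigr => a' /eqP <-.
under [RHS]eq_bigr => b _ do under eq_bigr => b' _ do rewrite fibre.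
under [RHS]eq_bigr => b _ do rewrite exchange_big /=.
rewrite (partition_big f predT) //=; apply: eq_bigr => b _.
by apply: eq_bigr => a _; rewrite (partition_big f predT).
Qed.

Lemma psd_pullback (M : B -> B -> R) (Y : A -> A -> R) :
  (forall a a', Y a a' = M (f a) (f a')) -> psd M -> psd Y.
Proof.
move=> YE [Msym Mpsd]; split=> [a a'|x]; first by rewrite !YE Msym.
under eq_bigr => a _ do under eq_bigr => a' _ do rewrite YE.
by rewrite quad_pullback.
Qed.

End PsdPullback.

(* Zeroing all entries between differently coloured indices keeps a matrix
   positive semidefinite: the result is a direct sum of principal submatrices. *)
Lemma psd_mask (R : realFieldType) (T C : finType) (c : T -> C)
    (M : T -> T -> R) :
  psd M -> psd (fun s t => if c s == c t then M s t else 0).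
Proof.
move=> [Msym Mpsd]; split=> [s t|x]; first by rewrite eq_sym Msym.
pose xc p s := if c s == p then x s else 0.
have split_colour s t : x s * (if c s == c t then M s t else 0) * x t
    = \sum_(p : C) xc p s * M s t * xc p t.
  rewrite /xc; under eq_bigr => p _ do
    rewrite (fun_if (fun y => y * _)) (fun_if (fun y => _ * y)) !mul0r !mulr0.
  case: (eqVneq (c s) (c t)) => [<-|neq_st].
    rewrite (bigD1 (c s)) //= !eqxx big1 ?addr0 // => p.
    by rewrite eq_sym => /negbTE ->.
  rewrite mulr0 mul0r big1 // => p _.
  by case: (eqVneq (c t) p) => // <-; rewrite (negbTE neq_st) mul0r.
under eq_bigr => s _ do under eq_bigr => t _ do rewrite split_colour.
under eq_bigr => s _ do rewrite exchange_big /=.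
by rewrite exchange_big sumr_ge0.
Qed.

(* The all-ones matrix is positive semidefinite: its form is (sum x)^2. *)
Lemma psd_ones (R : realFieldType) (T : finType) : psd (fun _ _ : T => 1 : R).
Proof.
split=> // x.
under eq_bigr => s _ do under eq_bigr => t _ do rewrite mulr1.
under eq_bigr => s _ do rewrite -big_distrr /=.
by rewrite -big_distrl /= -expr2 sqr_ge0.
Qed.

Lemma pseudomoment_ones (R : realFieldType) (N : nat) (T : finType)
    (w : T -> seq 'I_N) : pseudomoment w (fun _ _ => 1 : R).
Proof. by split=> //; apply: psd_ones. Qed.

Lemma pseudomoment_pullback (R : realFieldType) (N : nat) (A B : finType)
    (f : A -> B) (wA : A -> seq 'I_N) (wB : B -> seq 'I_N)
    (M : B -> B -> R) (Y : A -> A -> R) :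
  (forall a, wA a = wB (f a)) -> (forall a a', Y a a' = M (f a) (f a')) ->
  pseudomoment wB M -> pseudomoment wA Y.
Proof.
move=> wE YE [Mpsd Modd Mone]; split.
- exact: psd_pullback YE Mpsd.
- by move=> a b a' b'; rewrite !YE !wE; apply: Modd.
- by move=> a b; rewrite YE !wE; apply: Mone.
Qed.

Lemma odd_card_odd_syms (N : nat) (w : seq 'I_N) :
  odd #|odd_syms w| = odd (size w).
Proof.
elim: w => [|x w IH].
  suff -> : odd_syms [::] = set0 :> {set 'I_N} by rewrite cards0.
  by apply/setP => i; rewrite !inE.
have toggle : odd_syms (x :: w) =
    if x \in odd_syms w then odd_syms w :\ x else x |: odd_syms w.
  apply/setP => i; case: ifP; rewrite !inE /= oddD => odd_x.
    by case: (eqVneq x i) => [<-|neq_xi]; rewrite ?odd_x // eq_sym neq_xi.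
  by case: (eqVneq x i) => [<-|neq_xi]; rewrite ?odd_x // eq_sym (negbTE neq_xi).
rewrite toggle /=; case: ifP => xw.
  by move: IH; rewrite (cardsD1 x) xw /= => <-; case: (odd _).
by rewrite cardsU1 xw /= IH.
Qed.

Section Extension.
Variables (R : realFieldType) (n k : nat).
Implicit Types s t : strle n.+1 k.

Lemma size_strle s : (size (strle_seq s) <= k)%N.
Proof. by rewrite /strle_seq size_tuple -ltnS ltn_ord. Qed.

Definition pad s : k.-tuple 'I_n.+1 :=
  insubd [tuple of nseq k ord0]
    (strle_seq s ++ nseq (k - size (strle_seq s)) ord0).

Lemma val_pad s :
  val (pad s) = strle_seq s ++ nseq (k - size (strle_seq s)) ord0.
Proof. by rewrite val_insubd size_cat size_nseq subnKC ?size_strle ?eqxx. Qed.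

Lemma pad_emb (s : k.-tuple 'I_n.+1) : pad (str_emb s) = s.
Proof.
by apply: val_inj; rewrite val_pad /strle_seq /= size_tuple subnn cats0.
Qed.

Definition par s : bool := odd (size (strle_seq s)).

(* Padding two strings of equal length parity adds an even number of 0's. *)
Lemma odd_syms_pad s t : par s = par t ->
  odd_syms (val (pad s) ++ val (pad t)) = odd_syms (strle_seq s ++ strle_seq t).
Proof.
move=> st; apply/setP => i; rewrite !inE !val_pad !count_cat !count_nseq.
rewrite !oddD !oddM !oddB ?size_strle // -/(par s) -/(par t) st.
by case: (odd (count_mem i _)); case: (odd (count_mem i _)); case: (_ && _).
Qed.

Lemma same_par_odd_syms s t :
  (par s == par t) = ~~ odd #|odd_syms (strle_seq s ++ strle_seq t)|.
Proof.
rewrite odd_card_odd_syms size_cat oddD -/(par s) -/(par t).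
by case: (par s); case: (par t).
Qed.

Variable Zt : k.-tuple 'I_n.+1 -> k.-tuple 'I_n.+1 -> R.

Definition extend s t : R := if par s == par t then Zt (pad s) (pad t) else 0.

Lemma extend_emb (s t : k.-tuple 'I_n.+1) :
  extend (str_emb s) (str_emb t) = Zt s t.
Proof. by rewrite /extend /par /strle_seq /= !size_tuple eqxx !pad_emb. Qed.

Lemma pseudomoment_extend :
  pseudomoment (fun s : k.-tuple 'I_n.+1 => val s) Zt ->
  pseudomoment (@strle_seq n.+1 k) extend.
Proof.
move=> [Zpsd Zodd Zone]; split.
- apply: (psd_mask par (M := fun s t => Zt (pad s) (pad t))).
  exact: psd_pullback Zpsd.
- move=> s t s' t' st; rewrite /extend !same_par_odd_syms st.
  case: ifP => // even_st'; apply: Zodd.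
  have /eqP par_st : par s == par t by rewrite same_par_odd_syms st even_st'.
  have /eqP par_st' : par s' == par t' by rewrite same_par_odd_syms even_st'.
  by rewrite !odd_syms_pad.
- move=> s t st0.
  have /eqP par_st : par s == par t by rewrite same_par_odd_syms st0 cards0.
  by rewrite /extend par_st eqxx; apply: Zone; rewrite odd_syms_pad.
Qed.

End Extension.

Theorem mainTheorem14 (R : rcfType) (N d : nat) (d_pos : (0 < d)%N)
    (d_even : ~~ odd d)
    (Zt : d./2.-tuple 'I_N -> d./2.-tuple 'I_N -> R) :
  truncated_pm Zt <->
  exists Z : strle N d./2 -> strle N d./2 -> R,
    complete_pm Z /\
    (forall s t : d./2.-tuple 'I_N, Zt s t = Z (str_emb s) (str_emb t)).
Proof.
have k_pos : (0 < d./2)%N by case: d d_pos d_even {Zt} => [|[|d']].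
split=> [Ztpm|[Z [Zpm ZE]]]; last exact: pseudomoment_pullback ZE Zpm.
case: N Zt Ztpm => [|n] Zt Ztpm.
  (* no strings of positive length over the empty alphabet *)
  exists (fun _ _ => 1); split; first exact: pseudomoment_ones.
  by move=> s; case: (tnth s (Ordinal k_pos)).
exists (extend Zt); split; first exact: pseudomoment_extend.
by move=> s t; rewrite extend_emb.
Qed.
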